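(* Let $n$ be even and consider the four-objective problem AOAZ (defined in the context). The expected running time of SEMO applied to AOAZ is bounded by $O(\frac{5}{2}n^2\log n)$.
   Context: AOAZ: $\{0,1\}^n\to\mathbb{N}^4$, $\mathrm{AOAZ}(\mathbf{x})=(f_{11}(\mathbf{x}),f_{12}(\mathbf{x}),f_{21}(\mathbf{x}),f_{22}(\mathbf{x}))$ for $\mathbf{x}=(x_1,\dots,x_n)$, $n$ even, where $f_{11}(\mathbf{x})=\sum_{i=n/2+1}^{n}x_i$, $f_{12}(\mathbf{x})=\sum_{i=1}^{n/2}x_i+\sum_{i=n/2+1}^{n}(1-x_i)$, $f_{21}(\mathbf{x})=\sum_{i=1}^{n/2}(1-x_i)+\sum_{i=n/2+1}^{n}x_i$, $f_{22}(\mathbf{x})=\sum_{i=1}^{n/2}x_i$; all four objectives are maximized, with the usual Pareto dominance ($\mathbf{z}\succ\mathbf{x}$ if $\mathbf{z}$ is at least as good in all four objectives and strictly better in one). SEMO: choose $\mathbf{x}$ uniformly from $\{0,1\}^n$, $P=\{\mathbf{x}\}$. Each iteration: pick $\mathbf{x}\in P$ uniformly at random, flip one uniformly random bit to get $\mathbf{x}'$; if there is no $\mathbf{z}\in P$ with $\mathbf{z}\succ\mathbf{x}'$ or $\mathrm{AOAZ}(\mathbf{z})=\mathrm{AOAZ}(\mathbf{x}')$, set $P\leftarrow(P\setminus\{\mathbf{z}\in P:\mathbf{x}'\succ\mathbf{z}\})\cup\{\mathbf{x}'\}$. The running time is the number of fitness evaluations (mutations) until the population covers the whole Pareto front of AOAZ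 for the first time. *)

From HB Require Import structures.
From mathcomp Require Import all_boot all_order all_algebra.
From mathcomp Require Import reals exp.
Set Implicit Arguments. Unset Strict Implicit. Unset Printing Implicit Defensive.
Import Order.TTheory GRing.Theory Num.Theory.

(* bit strings of length n; index i : 'I_n is the paper's x_{i+1} *)
Definition bits (n : nat) := {ffun 'I_n -> bool}.

Section AOAZ.
Variable n : nat.

Definition f11 (x : bits n) : nat := \sum_(i < n | n./2 <= i) x i.
Definition f12 (x : bits n) : nat :=
  \sum_(i < n | i < n./2) x i + \sum_(i < n | n./2 <= i) (~~ x i).
Definition f21 (x : bits n) : nat :=
  \sum_(i < n | i < n./2) (~~ x i) + \sum_(i < n | n./2 <= i) x i.
Definition f22 (x : bits n) : nat := \sum_(i < n | i < n./2) x i.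

Definition AOAZ (x : bits n) : nat * nat * nat * nat :=
  (f11 x, f12 x, f21 x, f22 x).

Definition weakly_ge (v w : nat * nat * nat * nat) : bool :=
  let: (v1, v2, v3, v4) := v in let: (w1, w2, w3, w4) := w in
  [&& w1 <= v1, w2 <= v2, w3 <= v3 & w4 <= v4].

(* Pareto dominance: at least as good everywhere and strictly better somewhere
   (equivalently, weakly better and a different objective vector) *)
Definition dominates_vec (v w : nat * nat * nat * nat) : bool :=
  weakly_ge v w && (v != w).

Definition dominates (z x : bits n) : bool := dominates_vec (AOAZ z) (AOAZ x).

Definition pareto_optimal (x : bits n) : bool := [forall z, ~~ dominates z x].

Definition covers (P : {set bits n}) : bool :=
  [forall x, pareto_optimal x ==> [exists y in P, AOAZ y == AOAZ x]].

Definition flip (x : bits n) (i : 'I_n) : bits n :=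
  [ffun j => if j == i then ~~ x j else x j].

Definition semo_update (P : {set bits n}) (x' : bits n) : {set bits n} :=
  if [exists z in P, dominates z x' || (AOAZ z == AOAZ x')] then P
  else (P :\: [set z in P | dominates x' z]) :|: [set x'].

Variable R : realType.
Local Open Scope ring_scope.

(* one-step transition probability P -> Q of SEMO: x uniform in P,
   bit i uniform in 'I_n (the populations are always nonempty; the guard
   only makes the kernel total) *)
Definition semo_trans (P Q : {set bits n}) : R :=
  if (P == set0) || (n == 0)%N then (Q == P)%:R
  else (#|P| * n)%:R^-1 *
       #|[set p : bits n * 'I_n | (p.1 \in P) && (semo_update P (flip p.1 p.2) == Q)]|%:R.

Definition semo_init (Q : {set bits n}) : R :=
  \sum_(x : bits n) (2 ^ n)%:R^-1 * (Q == [set x])%:R.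

(* alive t Q = Pr[ P_t = Q and none of P_0, ..., P_t covers the front ] *)
Fixpoint alive (t : nat) (Q : {set bits n}) : R :=
  if covers Q then 0 else
  match t with
  | 0 => semo_init Q
  | t'.+1 => \sum_(P : {set bits n}) alive t' P * semo_trans P Q
  end.

(* Pr[T > t], where T is the number of mutations until the population
   covers the whole Pareto front for the first time *)
Definition tail_prob (t : nat) : R := \sum_(Q : {set bits n}) alive t Q.

End AOAZ.

From HB Require Import structures.
From mathcomp Require Import all_boot all_order all_algebra.
From mathcomp Require Import reals exp sequences.
From mathcomp Require Import zify ring lra.
Import Order.TTheory GRing.Theory Num.Theory.
Set Implicit Arguments. Unset Strict Implicit. Unset Printing Implicit Defensive.

(* Write a x := f22 x and b x := f11 x for the numbers of ones in the two
   halves of x, and m := n/2.  The objective vector of x only depends on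
   (a x, b x), and one vector weakly dominates another iff both lie on the same
   diagonal a - b (parametrised by f12 = a + m - b) and the first is larger in
   both coordinates.  Hence a SEMO population never holds two points on one
   diagonal, so it has at most n + 1 members, and the Pareto front consists of
   the n + 1 points with a = m or b = m.

   We apply additive drift to the potential
     n (n + 1) (H_(m - M) + sum over uncovered front points j of (1/l_j + 1/r_j)),
   where M is the largest coordinate in the population, H_k the k-th harmonic
   number, and l_j, r_j the numbers of single bit flips leading to front point
   j from its two neighbours on the front.  No step increases the potential.
   While M < m, a member realising M has m - M bit flips raising M; once M = m,
   some covered front point is adjacent to an uncovered one.  That member is
   selected with probability at least 1/(n + 1) and each bit with probability
   1/n, so the expected decrease is at least 1.  The initial potential is at
   most 6 n (n + 1) H_(m + 1) = O(n^2 log n). *)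

Section Halves.
Variable n : nat.
Local Notation m := n./2.

Lemma sum_flip_mem (P : pred 'I_n) (x : bits n) i : P i ->
  \sum_(j | P j) (flip x i j : nat) + x i = \sum_(j | P j) (x j : nat) + ~~ x i.
Proof.
move=> Pi; rewrite (bigD1 i) //= [in RHS](bigD1 i) //= ffunE eqxx.
have -> : \sum_(j | P j && (j != i)) (flip x i j : nat) =
          \sum_(j | P j && (j != i)) (x j : nat).
  by apply: eq_bigr => j /andP[_ /negbTE ji]; rewrite ffunE ji.
by case: (x i) => /=; lia.
Qed.

Lemma sum_flip_notin (P : pred 'I_n) (x : bits n) i : ~~ P i ->
  \sum_(j | P j) (flip x i j : nat) = \sum_(j | P j) (x j : nat).
Proof.
move=> Pi; apply: eq_bigr => j Pj; rewrite ffunE; case: eqP => // ji.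
by move: Pi; rewrite -ji Pj.
Qed.

Lemma sum_negb (P : pred 'I_n) (x : bits n) :
  \sum_(j | P j) (~~ x j : nat) = \sum_(j | P j) 1 - \sum_(j | P j) (x j : nat).
Proof.
have -> : \sum_(j | P j) 1 = \sum_(j | P j) ((x j : nat) + ~~ x j).
  by apply: eq_bigr => j _; case: (x j).
by rewrite big_split /=; lia.
Qed.

Lemma card_and_bits (P : pred 'I_n) (b : 'I_n -> bool) :
  #|[pred i | P i && b i]| = \sum_(i | P i) (b i : nat).
Proof. by rewrite -sum1_card big_mkcondr; apply: eq_bigr => i _; case: (b i). Qed.

Lemma f22_flip_lo (x : bits n) (i : 'I_n) : i < m -> f22 (flip x i) + x i = f22 x + ~~ x i.
Proof. by move=> im; rewrite /f22 (sum_flip_mem (P := fun j : 'I_n => j < m)). Qed.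

Lemma f11_flip_lo (x : bits n) (i : 'I_n) : i < m -> f11 (flip x i) = f11 x.
Proof. by move=> im; rewrite /f11 sum_flip_notin // -ltnNge. Qed.

Lemma f11_flip_hi (x : bits n) (i : 'I_n) : m <= i -> f11 (flip x i) + x i = f11 x + ~~ x i.
Proof. by move=> mi; rewrite /f11 (sum_flip_mem (P := fun j : 'I_n => m <= j)). Qed.

Lemma f22_flip_hi (x : bits n) (i : 'I_n) : m <= i -> f22 (flip x i) = f22 x.
Proof. by move=> mi; rewrite /f22 sum_flip_notin // -leqNgt. Qed.

Hypothesis n_even : ~~ odd n.

Lemma n_halves : n = m + m.
Proof. by rewrite -{1}(odd_double_half n) (negbTE n_even) add0n -addnn. Qed.

Lemma sum1_lo_half : \sum_(j < n | j < m) 1 = m.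
Proof.
have mn : m <= n by rewrite {2}n_halves leq_addr.
by rewrite (big_ord_narrow mn) sum1_card card_ord.
Qed.

Lemma sum1_hi_half : \sum_(j < n | m <= j) 1 = m.
Proof.
have : \sum_(j < n) 1 = n by rewrite sum1_card card_ord.
rewrite (bigID (fun j : 'I_n => j < m)) /= sum1_lo_half.
by rewrite (eq_bigl (fun j : 'I_n => m <= j)) => [|j]; rewrite -?leqNgt //; lia.
Qed.

Lemma f22_le_half (x : bits n) : f22 x <= m.
Proof. by rewrite /f22 -{2}sum1_lo_half; apply: leq_sum => i _; case: (x i). Qed.

Lemma f11_le_half (x : bits n) : f11 x <= m.
Proof. by rewrite /f11 -{2}sum1_hi_half; apply: leq_sum => i _; case: (x i). Qed.

Lemma f12E (x : bits n) : f12 x = f22 x + (m - f11 x).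
Proof. by rewrite /f12 sum_negb sum1_hi_half. Qed.

Lemma f21E (x : bits n) : f21 x = m - f22 x + f11 x.
Proof. by rewrite /f21 sum_negb sum1_lo_half. Qed.

Lemma card_lo_ones (x : bits n) : #|[pred i : 'I_n | (i < m) && x i]| = f22 x.
Proof. exact: card_and_bits. Qed.

Lemma card_lo_zeros (x : bits n) : #|[pred i : 'I_n | (i < m) && ~~ x i]| = m - f22 x.
Proof. by rewrite card_and_bits sum_negb sum1_lo_half. Qed.

Lemma card_hi_ones (x : bits n) : #|[pred i : 'I_n | (m <= i) && x i]| = f11 x.
Proof. exact: card_and_bits. Qed.

Lemma card_hi_zeros (x : bits n) : #|[pred i : 'I_n | (m <= i) && ~~ x i]| = m - f11 x.
Proof. by rewrite card_and_bits sum_negb sum1_hi_half. Qed.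

Lemma eq_AOAZ (y z : bits n) : (AOAZ y == AOAZ z) = (f22 y == f22 z) && (f11 y == f11 z).
Proof.
rewrite /AOAZ !f12E !f21E !xpair_eqE.
have := f22_le_half y; have := f22_le_half z; have := f11_le_half y; have := f11_le_half z.
by move=> *; apply/idP/idP => H; lia.
Qed.

Lemma weakly_ge_AOAZ (z y : bits n) : weakly_ge (AOAZ z) (AOAZ y) =
  [&& f22 y <= f22 z, f11 y <= f11 z & f22 z + f11 y == f22 y + f11 z].
Proof.
rewrite /weakly_ge /AOAZ !f12E !f21E.
have := f22_le_half y; have := f22_le_half z; have := f11_le_half y; have := f11_le_half z.
by move=> *; apply/idP/idP => H; lia.
Qed.

Lemma dominatesE (z y : bits n) :
  dominates z y = weakly_ge (AOAZ z) (AOAZ y) && (f22 y != f22 z).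
Proof.
rewrite /dominates /dominates_vec eq_AOAZ weakly_ge_AOAZ.
by apply/idP/idP => H; lia.
Qed.

Lemma eq_f12 (y z : bits n) : (f12 y == f12 z) = (f22 y + f11 z == f22 z + f11 y).
Proof.
rewrite !f12E; have := f11_le_half y; have := f11_le_half z.
by move=> *; apply/idP/idP => H; lia.
Qed.

Lemma f12_neq_incomparable (y z : bits n) :
  ~~ dominates y z -> ~~ dominates z y -> AOAZ y != AOAZ z -> f12 y != f12 z.
Proof. by rewrite !dominatesE !weakly_ge_AOAZ eq_AOAZ eq_f12 => *; lia. Qed.

End Halves.

Section Population.
Variable n : nat.
Hypothesis n_even : ~~ odd n.

Definition semo_inv (P : {set bits n}) : bool :=
  (P != set0) && [forall y in P, forall z in P, (f12 y == f12 z) ==> (y == z)].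

Lemma semo_inv_set1 (x : bits n) : semo_inv [set x].
Proof.
apply/andP; split; first by apply/set0Pn; exists x; rewrite in_set1.
apply/forall_inP => y; rewrite in_set1 => /eqP ->.
by apply/forall_inP => z; rewrite in_set1 => /eqP ->; rewrite !eqxx.
Qed.

Lemma semo_inv_inj (P : {set bits n}) : semo_inv P -> {in P &, injective (@f12 n)}.
Proof.
case/andP=> _ /forall_inP inj y z yP zP e.
by have /forall_inP/(_ z zP) := inj y yP; rewrite e eqxx => /eqP.
Qed.

Lemma card_semo_inv (P : {set bits n}) : semo_inv P -> #|P| <= n.+1.
Proof.
move/semo_inv_inj=> inj; rewrite cardE -(size_map (@f12 n)) -(size_iota 0 n.+1).
apply: uniq_leq_size.
  by rewrite map_inj_in_uniq ?enum_uniq // => y z; rewrite !mem_enum; exact: inj.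
move=> _ /mapP[y _ ->]; rewrite mem_iota f12E //.
have := f22_le_half n_even y; have := n_halves n_even; lia.
Qed.

Lemma semo_inv_update (P : {set bits n}) (x' : bits n) :
  semo_inv P -> semo_inv (semo_update P x').
Proof.
move=> invP; rewrite /semo_update; case: existsP => // incomp.
have f12_neq z : z \in P -> ~~ dominates x' z -> f12 z != f12 x'.
  move=> zP nd; apply: f12_neq_incomparable => //;
    by apply/negP => D; apply: incomp; exists z; rewrite zP D ?orbT.
apply/andP; split; first by apply/set0Pn; exists x'; rewrite !inE eqxx orbT.
have inj := semo_inv_inj invP.
apply/forall_inP => y; rewrite !inE => /orP[/andP[ny yP] | /eqP->];
  apply/forall_inP => z; rewrite !inE => /orP[/andP[nz zP] | /eqP->];
  apply/implyP => /eqP e; rewrite ?eqxx //.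
- by rewrite (inj y z).
- by rewrite yP in ny; move: (f12_neq y yP ny); rewrite e eqxx.
- by rewrite zP in nz; move: (f12_neq z zP nz); rewrite e eqxx.
Qed.

Lemma update_weakly_ge (P : {set bits n}) (x' y : bits n) : y \in P ->
  exists2 y', y' \in semo_update P x' & weakly_ge (AOAZ y') (AOAZ y).
Proof.
have refl : weakly_ge (AOAZ y) (AOAZ y) by rewrite weakly_ge_AOAZ //; lia.
move=> yP; rewrite /semo_update; case: ifP => _; first by exists y.
case D: (dominates x' y); last by exists y; rewrite // !inE yP D.
by exists x'; [rewrite !inE eqxx orbT | case/andP: D].
Qed.

Lemma mem_update_offspring (P : {set bits n}) (x' : bits n) :
  (forall z, z \in P -> ~~ weakly_ge (AOAZ z) (AOAZ x')) -> x' \in semo_update P x'.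
Proof.
move=> nge; rewrite /semo_update; case: existsP => [[z /andP[zP]] | _]; last first.
  by rewrite !inE eqxx orbT.
move: (nge z zP) => ngez /orP[/andP[gez _] | /eqP E]; first by rewrite gez in ngez.
by rewrite E weakly_ge_AOAZ // !leqnn eqxx in ngez.
Qed.

End Population.

Section Chain.
Variables (n : nat) (R : realType).
Hypothesis n_even : ~~ odd n.
Local Open Scope ring_scope.

Lemma semo_trans_ge0 (P Q : {set bits n}) : 0 <= semo_trans R P Q.
Proof. by rewrite /semo_trans; case: ifP => _; rewrite ?mulr_ge0 ?invr_ge0. Qed.

Lemma semo_init_ge0 (Q : {set bits n}) : 0 <= semo_init R Q.
Proof. by apply: sumr_ge0 => x _; rewrite mulr_ge0 ?invr_ge0. Qed.

Lemma alive_ge0 t (Q : {set bits n}) : 0 <= alive R t Q.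
Proof.
elim: t Q => [|t IH] Q /=; case: ifP => _ //; first exact: semo_init_ge0.
by apply: sumr_ge0 => P _; rewrite mulr_ge0 ?IH ?semo_trans_ge0.
Qed.

Lemma alive_eq0 t (Q : {set bits n}) : ~~ semo_inv Q -> alive R t Q = 0.
Proof.
elim: t Q => [|t IH] Q notinv /=; case: ifP => _ //.
  rewrite /semo_init big1 // => x _; case: eqP => [eQ|_]; last by rewrite mulr0.
  by move: notinv; rewrite eQ semo_inv_set1.
rewrite big1 // => P _; have [invP|/IH-> ] := boolP (semo_inv P); last by rewrite mul0r.
rewrite /semo_trans; have /negbTE-> : P != set0 by case/andP: invP.
case: eqP => [_ | _] /=.
  by case: eqP => [eQ|_]; [move: notinv; rewrite eQ invP | rewrite mulr0].
suff -> : [set p : bits n * 'I_n | (p.1 \in P) && (semo_update P (flip p.1 p.2) == Q)]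
  = set0 by rewrite cards0 mulr0n !mulr0.
apply/setP => p; rewrite !inE; apply/negP => /andP[_ /eqP eQ].
by move: notinv; rewrite -eQ semo_inv_update.
Qed.

Lemma semo_trans_expect (P : {set bits n}) (g : {set bits n} -> R) :
  P != set0 -> n != 0%N ->
  \sum_Q semo_trans R P Q * g Q =
  (#|P| * n)%:R^-1 * \sum_(x in P) \sum_(i < n) g (semo_update P (flip x i)).
Proof.
move=> P0 n0; rewrite /semo_trans (negbTE P0) (negbTE n0) /=.
under eq_bigr do rewrite -mulrA.
rewrite -mulr_sumr pair_big_dep /=; congr (_ * _).
rewrite (partition_big (fun p : bits n * 'I_n => semo_update P (flip p.1 p.2)) predT) //=.
apply: eq_bigr => Q _.
rewrite (eq_bigr (fun _ => g Q)); last by move=> p /andP[_ /eqP ->].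
rewrite sumr_const -[RHS]mulr_natl; congr (_%:R * _).
by apply: eq_card => p; rewrite !inE unfold_in /= andbT.
Qed.

Section AdditiveDrift.
Variables (g : {set bits n} -> R) (B : R).
Hypothesis g_ge0 : forall Q, 0 <= g Q.
Hypothesis g_drift : forall P, semo_inv P -> ~~ covers P ->
  \sum_Q semo_trans R P Q * g Q <= g P - 1.
Hypothesis g_init : forall x, g [set x] <= B.

Let expected_g t := \sum_Q alive R t Q * g Q.

Lemma expected_g_step t : expected_g t.+1 + tail_prob n R t <= expected_g t.
Proof.
have next : expected_g t.+1 <= \sum_P alive R t P * \sum_Q semo_trans R P Q * g Q.
  under [leRHS]eq_bigr do rewrite mulr_sumr.
  rewrite [leRHS]exchange_big; apply: ler_sum => Q _ /=.
  case: ifP => _; last by rewrite mulr_suml; apply: ler_sum => P _; rewrite mulrA.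
  rewrite mul0r; apply: sumr_ge0 => P _.
  by rewrite mulrA !mulr_ge0 ?alive_ge0 ?semo_trans_ge0.
have drift : \sum_P alive R t P * \sum_Q semo_trans R P Q * g Q <=
             \sum_P alive R t P * (g P - 1).
  apply: ler_sum => P _.
  have [invP|/(alive_eq0 t)->] := boolP (semo_inv P); last by rewrite !mul0r.
  have [covP|ncovP] := boolP (covers P); last by rewrite ler_wpM2l ?alive_ge0 ?g_drift.
  by rewrite (_ : alive R t P = 0) ?mul0r //; case: (t) => /= [|?]; rewrite covP.
rewrite -lerBrDr; apply: (le_trans next); apply: (le_trans drift).
by rewrite /expected_g /tail_prob -sumrB; under eq_bigr do rewrite mulrBr mulr1.
Qed.

Lemma expected_g0_le : expected_g 0 <= B.
Proof.
apply: (@le_trans _ _ (\sum_Q semo_init R Q * g Q)).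
  by apply: ler_sum => Q _ /=; case: ifP => _; rewrite ?mul0r ?mulr_ge0 ?semo_init_ge0.
rewrite /semo_init; under eq_bigr do rewrite mulr_suml.
rewrite exchange_big /=.
apply: (@le_trans _ _ (\sum_(x : bits n) (2 ^ n)%:R^-1 * B)).
  apply: ler_sum => x _; rewrite (bigD1 [set x]) //= eqxx mulr1 big1 ?addr0.
    by rewrite ler_wpM2l ?invr_ge0.
  by move=> Q /negbTE->; rewrite mulr0 mul0r.
rewrite sumr_const card_ffun card_bool card_ord -[leLHS]mulr_natl mulrA mulfV ?mul1r //.
by rewrite pnatr_eq0 expn_eq0.
Qed.

Theorem tail_sum_le_drift N : \sum_(t < N) tail_prob n R t <= B.
Proof.
suff tail_sum t : \sum_(i < t) tail_prob n R i + expected_g t <= expected_g 0.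
  apply: le_trans expected_g0_le; apply: le_trans (tail_sum N).
  by rewrite lerDl sumr_ge0 // => Q _; rewrite mulr_ge0 ?alive_ge0.
elim: t => [|t IH]; first by rewrite big_ord0 add0r.
by rewrite big_ord_recr /= (le_trans _ IH) // -addrA lerD2l addrC expected_g_step.
Qed.

End AdditiveDrift.

Lemma drift_of_improving_flips (g : {set bits n} -> R) (P : {set bits n})
    (x0 : bits n) (c : pred 'I_n) :
  semo_inv P -> x0 \in P -> (0 < #|c|)%N ->
  (forall x i, x \in P -> g (semo_update P (flip x i)) <= g P) ->
  (forall i, c i -> g (semo_update P (flip x0 i)) + (n * n.+1)%:R / #|c|%:R <= g P) ->
  \sum_Q semo_trans R P Q * g Q <= g P - 1.
Proof.
move=> invP x0P c0 g_mono g_dec.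
have n0 : (0 < n)%N by apply: leq_trans c0 _; rewrite -[n in (_ <= n)%N]card_ord max_card.
have P0 : P != set0 by case/andP: invP.
set K : R := (n * n.+1)%:R; set k : R := #|c|%:R.
have k0 : 0 < k by rewrite ltr0n.
have parent_sum x : x \in P ->
    \sum_(i < n) g (semo_update P (flip x i)) <= n%:R * g P - (x == x0)%:R * K.
  move=> xP; case: (x =P x0) => [->|_]; last first.
    rewrite mul0r subr0 mulr_natl -[n in _ *+ n]card_ord -sumr_const.
    by apply: ler_sum => i _; apply: g_mono.
  rewrite mul1r; apply: (@le_trans _ _ (\sum_(i < n) (g P - (c i)%:R * (K / k)))).
    apply: ler_sum => i _; case ci: (c i); last by rewrite mul0r subr0 g_mono.
    by rewrite mul1r lerBrDr g_dec.
  have card_c : (\sum_i (c i : nat))%N = #|c|.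
    rewrite -sum1_card [RHS]big_mkcond; apply: eq_bigr => i _.
    by rewrite unfold_in; case: (c i).
  rewrite sumrB sumr_const card_ord -mulr_suml -natr_sum card_c -/k.
  by rewrite mulrCA mulfV ?gt_eqF // mulr1 mulr_natl.
rewrite semo_trans_expect // -?lt0n // ler_pdivrMl; last first.
  by rewrite ltr0n muln_gt0 n0 card_gt0 P0.
apply: (le_trans (ler_sum _ parent_sum)).
rewrite sumrB sumr_const (bigD1 x0) //= eqxx mul1r big1 ?addr0; last first.
  by move=> x /andP[_ /negbTE->]; rewrite mul0r.
have : (#|P| * n <= n * n.+1)%N by rewrite mulnC leq_mul2l card_semo_inv ?orbT.
rewrite -(ler_nat R) -/K natrM -mulr_natl; nra.
Qed.

End Chain.

Lemma exists_change_point (f : nat -> bool) n j1 j2 :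
  j1 <= n -> j2 <= n -> f j1 -> ~~ f j2 -> exists2 j, j < n & f j != f j.+1.
Proof.
move=> j1n j2n fj1 nfj2.
have [/existsP[j fj] | /existsPn const] := boolP [exists j : 'I_n, f j != f j.+1].
  by exists j.
suff fE k : k <= n -> f k = f 0 by move: nfj2; rewrite fE // -(fE j1) ?fj1.
elim: k => // k IH kn; rewrite -IH ?(ltnW kn) //.
by have /negPn/eqP := const (Ordinal kn).
Qed.

Section Front.
Variable n : nat.
Hypothesis n_even : ~~ odd n.
Local Notation m := n./2.

(* The front, as pairs (f22, f11), runs from (0, m) through (m, m) to (m, 0). *)
Definition front_pt (j : nat) : nat * nat := if j <= m then (j, m) else (m, n - j).

Lemma front_pt_lo j : j <= m -> front_pt j = (j, m).
Proof. by rewrite /front_pt => ->. Qed.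

Lemma front_pt_hi j : m <= j -> front_pt j = (m, n - j).
Proof.
have := n_halves n_even; rewrite /front_pt => nE mj.
by case: leqP => jm //; congr pair; lia.
Qed.

Definition covered (P : {set bits n}) (j : nat) : bool :=
  [exists y in P, (f22 y, f11 y) == front_pt j].

(* The numbers of bit flips moving front point j - 1, resp. j + 1, to front
   point j.  The values at j = 0 and j = n, which lack that neighbour, are
   arbitrary positive numbers. *)
Definition flips_from_pred (j : nat) : nat := if j <= m then (m - j).+1 else (n - j).+1.

Definition flips_from_succ (j : nat) : nat := if j < m then j.+1 else j.+1 - m.

Lemma flips_from_succ_gt0 j : 0 < flips_from_succ j.
Proof. by rewrite /flips_from_succ; case: (ltnP j m) => // mj; lia. Qed.

Lemma pareto_optimal_front (x : bits n) : pareto_optimal x -> f22 x = m \/ f11 x = m.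
Proof.
move=> /forallP opt; have := f22_le_half n_even x; have := f11_le_half n_even x.
case: (ltnP (f22 x) m) => ha; last by left; lia.
case: (ltnP (f11 x) m) => hb; last by right; lia.
have /card_gt0P[i /andP[im xi]] : 0 < #|[pred i : 'I_n | (i < m) && ~~ x i]|.
  by rewrite card_lo_zeros //; lia.
set x1 := flip x i.
have /card_gt0P[i' /andP[mi' x1i']] : 0 < #|[pred i : 'I_n | (m <= i) && ~~ x1 i]|.
  by rewrite card_hi_zeros // f11_flip_lo //; lia.
move: (opt (flip x1 i')); rewrite dominatesE // weakly_ge_AOAZ //.
have := f22_flip_lo x im; have := f11_flip_lo x im.
have := f11_flip_hi x1 mi'; have := f22_flip_hi x1 mi'.
by rewrite -/x1 (negbTE xi) (negbTE x1i'); lia.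
Qed.

Lemma front_ptP (x : bits n) : f22 x = m \/ f11 x = m ->
  exists2 j, j <= n & front_pt j = (f22 x, f11 x).
Proof.
have := f22_le_half n_even x; have := f11_le_half n_even x; have := n_halves n_even.
rewrite /front_pt => nE ha hb [] xm.
  by exists (n - f11 x); [lia | case: leqP => jm; congr pair; lia].
by exists (f22 x); [lia | case: leqP => jm; congr pair; lia].
Qed.

Lemma exists_uncovered P : ~~ covers P -> exists2 j, j <= n & ~~ covered P j.
Proof.
case/forallPn => x; rewrite negb_imply => /andP[/pareto_optimal_front opt /existsPn notin].
have [j jn xj] := front_ptP opt.
exists j => //; apply/existsPn => y; apply/negP => /andP[yP]; rewrite xj.
move: (notin y); rewrite yP eq_AOAZ // => /negP nyx /eqP[ea eb].
by apply: nyx; rewrite ea eb !eqxx.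
Qed.

Lemma weakly_ge_front (y' y : bits n) j : (f22 y, f11 y) = front_pt j ->
  weakly_ge (AOAZ y') (AOAZ y) -> (f22 y', f11 y') = front_pt j.
Proof.
rewrite weakly_ge_AOAZ // /front_pt.
have := f22_le_half n_even y'; have := f11_le_half n_even y'.
by case: ifP => _ ha hb [ea eb] /and3P[le1 le2 /eqP diag]; congr pair; lia.
Qed.

Lemma covered_update P x' j : covered P j -> covered (semo_update P x') j.
Proof.
case/existsP => y /andP[yP /eqP yj]; have [y' y'P ge] := update_weakly_ge n_even x' yP.
by apply/existsP; exists y'; rewrite y'P (weakly_ge_front yj ge) eqxx.
Qed.

Lemma mem_update_front P x' j : ~~ covered P j -> (f22 x', f11 x') = front_pt j ->
  x' \in semo_update P x'.
Proof.
move=> ncov x'j; apply: mem_update_offspring => // z zP; apply/negP => ge.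
by move/existsP: ncov; apply; exists z; rewrite zP (weakly_ge_front x'j ge) eqxx.
Qed.

Lemma flips_to_succ (y : bits n) j : j < n -> (f22 y, f11 y) = front_pt j ->
  exists c : pred 'I_n, #|c| = flips_from_pred j.+1 /\
    forall i, c i -> (f22 (flip y i), f11 (flip y i)) = front_pt j.+1.
Proof.
have := n_halves n_even; rewrite /flips_from_pred => nE jn.
case: (ltnP j m) => jm.
- rewrite (front_pt_lo (ltnW jm)) (front_pt_lo jm) => -[ya yb].
  exists [pred i : 'I_n | (i < m) && ~~ y i]; rewrite card_lo_zeros //.
  split; first lia.
  move=> i /andP[im yi]; have := f22_flip_lo y im; rewrite f11_flip_lo // (negbTE yi).
  by move=> fa; congr pair; lia.
- rewrite (front_pt_hi jm) (front_pt_hi (leqW jm)) => -[ya yb].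
  exists [pred i : 'I_n | (m <= i) && y i]; rewrite card_hi_ones.
  split; first lia.
  move=> i /andP[mi yi]; have := f11_flip_hi y mi; rewrite f22_flip_hi // yi.
  by move=> fb; congr pair; lia.
Qed.

Lemma flips_to_pred (y : bits n) j : j < n -> (f22 y, f11 y) = front_pt j.+1 ->
  exists c : pred 'I_n, #|c| = flips_from_succ j /\
    forall i, c i -> (f22 (flip y i), f11 (flip y i)) = front_pt j.
Proof.
have := n_halves n_even; rewrite /flips_from_succ => nE jn.
case: (ltnP j m) => jm.
- rewrite (front_pt_lo (ltnW jm)) (front_pt_lo jm) => -[ya yb].
  exists [pred i : 'I_n | (i < m) && y i]; rewrite card_lo_ones.
  split; first lia.
  move=> i /andP[im yi]; have := f22_flip_lo y im; rewrite f11_flip_lo // yi.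
  by move=> fa; congr pair; lia.
- rewrite (front_pt_hi jm) (front_pt_hi (leqW jm)) => -[ya yb].
  exists [pred i : 'I_n | (m <= i) && ~~ y i]; rewrite card_hi_zeros //.
  split; first lia.
  move=> i /andP[mi yi]; have := f11_flip_hi y mi; rewrite f22_flip_hi // (negbTE yi).
  by move=> fb; congr pair; lia.
Qed.

End Front.

Section Potential.
Variables (n : nat) (R : realType).
Hypothesis n_even : ~~ odd n.
Local Notation m := n./2.

Definition max_coord (P : {set bits n}) : nat := \max_(y in P) maxn (f22 y) (f11 y).

Lemma leq_max_coord (P : {set bits n}) y : y \in P -> maxn (f22 y) (f11 y) <= max_coord P.
Proof. exact: leq_bigmax_cond. Qed.

Lemma max_coord_le_half (P : {set bits n}) : max_coord P <= m.
Proof. by apply/bigmax_leqP => y _; rewrite geq_max !(f22_le_half, f11_le_half). Qed.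

Lemma max_coord_update (P : {set bits n}) (x' : bits n) :
  max_coord P <= max_coord (semo_update P x').
Proof.
apply/bigmax_leqP => y yP; have [y' y'P] := update_weakly_ge n_even x' yP.
rewrite weakly_ge_AOAZ // => ge; have := leq_max_coord y'P; lia.
Qed.

Lemma max_coord_ex (P : {set bits n}) : P != set0 ->
  exists2 x, x \in P & maxn (f22 x) (f11 x) = max_coord P.
Proof.
rewrite -card_gt0 => /(eq_bigmax_cond (fun y => maxn (f22 y) (f11 y)))[x xP e].
by exists x.
Qed.

Lemma exists_max_coord_flips (x : bits n) : maxn (f22 x) (f11 x) < m ->
  exists c : pred 'I_n, #|c| = m - maxn (f22 x) (f11 x) /\
    forall i, c i -> maxn (f22 (flip x i)) (f11 (flip x i)) = (maxn (f22 x) (f11 x)).+1.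
Proof.
case: (leqP (f11 x) (f22 x)) => ba xm.
- exists [pred i : 'I_n | (i < m) && ~~ x i]; rewrite card_lo_zeros //.
  split; first lia.
  move=> i /andP[im xi]; have := f22_flip_lo x im; rewrite f11_flip_lo // (negbTE xi).
  lia.
- exists [pred i : 'I_n | (m <= i) && ~~ x i]; rewrite card_hi_zeros //.
  split; first lia.
  move=> i /andP[mi xi]; have := f11_flip_hi x mi; rewrite f22_flip_hi // (negbTE xi).
  lia.
Qed.

Local Open Scope ring_scope.

Definition front_weight (j : nat) : R :=
  (flips_from_pred n j)%:R^-1 + (flips_from_succ n j)%:R^-1.

Definition potential (P : {set bits n}) : R :=
  (n * n.+1)%:R * (series harmonic (m - max_coord P)%N
                   + \sum_(j < n.+1 | ~~ covered P j) front_weight j).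

Lemma harmonic_series_le k1 k2 : (k1 <= k2)%N ->
  series (@harmonic R) k1 <= series harmonic k2.
Proof. by apply: (nondecreasing_series (P := xpredT)) => *; exact: harmonic_ge0. Qed.

Lemma front_weight_ge0 j : 0 <= front_weight j.
Proof. by rewrite addr_ge0 // invr_ge0. Qed.

Lemma potential_ge0 (P : {set bits n}) : 0 <= potential P.
Proof.
rewrite mulr_ge0 // addr_ge0 ?sumr_ge0 // => i _;
  by rewrite ?harmonic_ge0 ?front_weight_ge0.
Qed.

Lemma uncovered_sum_update (P : {set bits n}) (x' : bits n) :
  \sum_(j < n.+1 | ~~ covered (semo_update P x') j) front_weight j <=
  \sum_(j < n.+1 | ~~ covered P j) front_weight j.
Proof.
rewrite [leLHS]big_mkcond [leRHS]big_mkcond; apply: ler_sum => j _.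
case: (boolP (covered P j)) => [/(covered_update n_even x')-> // | _].
by case: ifP => _ //; apply: front_weight_ge0.
Qed.

Lemma potential_update_le (P : {set bits n}) (x' : bits n) :
  potential (semo_update P x') <= potential P.
Proof.
rewrite ler_wpM2l // lerD ?uncovered_sum_update // harmonic_series_le //.
by have := max_coord_update P x'; lia.
Qed.

Lemma harmonic_series_step k' k : (k' < k)%N ->
  series (@harmonic R) k' + k%:R^-1 <= series harmonic k.
Proof. by case: k => // k lt; rewrite seriesSr lerD2r harmonic_series_le. Qed.

Lemma potential_update_max_coord (P : {set bits n}) (x' : bits n) :
  (max_coord P < maxn (f22 x') (f11 x'))%N ->
  potential (semo_update P x') + (n * n.+1)%:R / (m - max_coord P)%:R <= potential P.
Proof.
move=> gtM; have x'P : x' \in semo_update P x'.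
  apply: mem_update_offspring => // z zP; apply/negP; rewrite weakly_ge_AOAZ // => ge.
  by have := leq_max_coord zP; lia.
have upM : (max_coord P < max_coord (semo_update P x'))%N.
  exact: leq_trans gtM (leq_max_coord x'P).
rewrite /potential -mulrDr ler_wpM2l // addrAC lerD ?uncovered_sum_update //.
apply: harmonic_series_step; have := max_coord_le_half (semo_update P x'); lia.
Qed.

Lemma drift_off_front (P : {set bits n}) : semo_inv P -> (max_coord P < m)%N ->
  \sum_Q semo_trans R P Q * potential Q <= potential P - 1.
Proof.
move=> invP ltM; have [x0 x0P x0M] := max_coord_ex (proj1 (andP invP)).
have [c [card_c flip_c]] : exists c : pred 'I_n, #|c| = (m - max_coord P)%N /\
    forall i, c i -> maxn (f22 (flip x0 i)) (f11 (flip x0 i)) = (max_coord P).+1.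
  by rewrite -x0M; apply: exists_max_coord_flips; rewrite x0M.
apply: (drift_of_improving_flips n_even (x0 := x0) (c := c)) => //.
- by rewrite card_c; lia.
- by move=> x i _; apply: potential_update_le.
- by move=> i ci; rewrite card_c potential_update_max_coord // flip_c.
Qed.

Lemma potential_update_front (P : {set bits n}) (x' : bits n) j :
  (j <= n)%N -> ~~ covered P j -> (f22 x', f11 x') = front_pt n j ->
  potential (semo_update P x') + (n * n.+1)%:R * front_weight j <= potential P.
Proof.
move=> jn ncov x'j; have x'P := mem_update_front n_even ncov x'j.
have cov' : covered (semo_update P x') j by apply/existsP; exists x'; rewrite x'P x'j eqxx.
rewrite /potential -mulrDr ler_wpM2l // -addrA lerD ?harmonic_series_le //;
  first by have := max_coord_update P x'; lia.
rewrite [leRHS](bigD1 (Ordinal (jn : (j < n.+1)%N))) //= addrC lerD2l.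
rewrite [leLHS]big_mkcond [leRHS]big_mkcond; apply: ler_sum => k _.
case: (boolP (covered (semo_update P x') k)) => [_ | nck] /=.
  by case: ifP => _ //; apply: front_weight_ge0.
rewrite (contraNN (@covered_update _ n_even P x' k) nck) /=.
by case: eqP => [kj|_] //; move: nck; rewrite kj cov'.
Qed.

Lemma drift_of_front_flips (P : {set bits n}) (y : bits n) j (c : pred 'I_n) :
  semo_inv P -> y \in P -> (j <= n)%N -> ~~ covered P j ->
  (#|c| = flips_from_pred n j \/ #|c| = flips_from_succ n j) ->
  (forall i, c i -> (f22 (flip y i), f11 (flip y i)) = front_pt n j) ->
  \sum_Q semo_trans R P Q * potential Q <= potential P - 1.
Proof.
move=> invP yP jn ncov card_c flip_c.
apply: (drift_of_improving_flips n_even (x0 := y) (c := c)) => // [| x i _ | i ci].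
- case: card_c => ->; last exact: flips_from_succ_gt0.
  by rewrite /flips_from_pred; case: ifP.
- exact: potential_update_le.
apply: le_trans (potential_update_front jn ncov (flip_c i ci)).
rewrite lerD2l ler_wpM2l // /front_weight.
by case: card_c => ->; rewrite ?lerDl ?lerDr invr_ge0.
Qed.

Lemma drift_on_front (P : {set bits n}) : semo_inv P -> max_coord P = m -> ~~ covers P ->
  \sum_Q semo_trans R P Q * potential Q <= potential P - 1.
Proof.
move=> invP PM ncov; have [x0 x0P x0M] := max_coord_ex (proj1 (andP invP)).
have [j1 j1n x0j1] : exists2 j, (j <= n)%N & front_pt n j = (f22 x0, f11 x0).
  by apply: front_ptP => //; rewrite PM in x0M; lia.
have cov1 : covered P j1 by apply/existsP; exists x0; rewrite x0P x0j1 eqxx.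
have [j2 j2n ncov2] := exists_uncovered n_even ncov.
have [j jn change] := exists_change_point j1n j2n cov1 ncov2.
case: (boolP (covered P j)) => [covj | ncovj].
- have ncovj1 : ~~ covered P j.+1 by move: change; rewrite covj; case: (covered P j.+1).
  case/existsP: covj => y /andP[yP /eqP yj].
  have [c [card_c flip_c]] := flips_to_succ n_even jn yj.
  exact: drift_of_front_flips invP yP jn ncovj1 (or_introl card_c) flip_c.
- have covj1 : covered P j.+1.
    by move: change; rewrite (negbTE ncovj); case: (covered P j.+1).
  case/existsP: covj1 => y /andP[yP /eqP yj].
  have [c [card_c flip_c]] := flips_to_pred n_even jn yj.
  exact: drift_of_front_flips invP yP (ltnW jn) ncovj (or_intror card_c) flip_c.
Qed.

Lemma potential_drift (P : {set bits n}) : semo_inv P -> ~~ covers P ->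
  \sum_Q semo_trans R P Q * potential Q <= potential P - 1.
Proof.
move=> invP ncov; case: (ltnP (max_coord P) m) => PM; first exact: drift_off_front.
by apply: drift_on_front => //; have := max_coord_le_half P; lia.
Qed.

End Potential.

Section Bounds.
Variable R : realType.
Local Open Scope ring_scope.
Local Notation H := (series (@harmonic R)).

Lemma harmonic_series_le_ln k : H k.+1 <= 1 + ln k.+1%:R.
Proof.
elim: k => [|k IH]; first by rewrite seriesSr /series /= big_geq // add0r ln1 addr0 invr1.
rewrite seriesSr /=; apply: (le_trans (lerD IH (lexx _))); rewrite -addrA lerD2l.
have := @le_ln1Dx R (- k.+2%:R^-1); rewrite ltrNl opprK invf_lt1 ?ltr1n // => /(_ isT).
have -> : 1 - k.+2%:R^-1 = k.+1%:R / k.+2%:R :> R.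
  by rewrite -[k.+2]addn1 natrD; field; apply/negP => /eqP; have := ler0n R k.+1; lra.
by rewrite ln_div ?posrE ?ltr0n //; move: (ln _) (ln _) (_^-1) => a b c; lra.
Qed.

Lemma harmonic_series_rev k : \sum_(0 <= j < k) harmonic (k - j.+1)%N = H k :> R.
Proof. by rewrite [RHS]big_nat_rev add0n. Qed.

Variable n : nat.
Hypothesis n_even : ~~ odd n.
Local Notation m := n./2.

Lemma sum_front_weight_lo : \sum_(0 <= j < m.+1) front_weight n R j <= 3%:R * H m.+1.
Proof.
pose bound j := harmonic (m.+1 - j.+1)%N + harmonic (m.+1 - j.+1)%N + harmonic j : R.
apply: (@le_trans _ _ (\sum_(0 <= j < m.+1) bound j)).
  apply: ler_sum_nat => j /andP[_ jm].
  rewrite /bound subSS /front_weight /flips_from_pred ifT //.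
  rewrite /flips_from_succ /=; case: ltnP => mj; first by rewrite lerD2r lerDl invr_ge0.
  by rewrite (_ : (j.+1 - m)%N = (m - j).+1) ?lerDl ?invr_ge0 //; lia.
by rewrite !big_split harmonic_series_rev /series /=; lra.
Qed.

Lemma sum_front_weight_hi : \sum_(m.+1 <= j < n.+1) front_weight n R j <= 2%:R * H m.
Proof.
have nE := n_halves n_even.
rewrite -{1}(add0n m.+1) big_addn (_ : (n.+1 - m.+1 = m)%N); last lia.
apply: (@le_trans _ _ (\sum_(0 <= k < m) (harmonic (m - k.+1)%N + harmonic k))).
  apply: ler_sum_nat => k /andP[_ km].
  rewrite /front_weight /flips_from_pred /flips_from_succ !ifF; [|lia|lia].
  rewrite (_ : (n - (k + m.+1)).+1 = (m - k.+1).+1)%N; last lia.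
  rewrite (_ : ((k + m.+1).+1 - m)%N = k.+2); last lia.
  by rewrite lerD2l lef_pV2 ?posrE ?ltr0n // ler_nat.
by rewrite big_split /= harmonic_series_rev /series /=; lra.
Qed.

Lemma sum_front_weight_le : \sum_(j < n.+1) front_weight n R j <= 5%:R * H m.+1.
Proof.
have nE := n_halves n_even.
rewrite -(big_mkord xpredT) (big_cat_nat _ (n := m.+1)) //=; last lia.
have := sum_front_weight_lo; have := sum_front_weight_hi.
have : H m <= H m.+1 by apply: harmonic_series_le.
lra.
Qed.

Lemma potential_set1_le (x : bits n) :
  potential R [set x] <= (n * n.+1)%:R * (6%:R * H m.+1).
Proof.
rewrite ler_wpM2l //.
have H_le : H (m - max_coord [set x])%N <= H m.+1 by apply: harmonic_series_le; lia.
have S_le : \sum_(j < n.+1 | ~~ covered [set x] j) front_weight n R j <= 5%:R * H m.+1.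
  apply: le_trans sum_front_weight_le.
  rewrite [leRHS](bigID (fun j : 'I_n.+1 => ~~ covered [set x] j)) /= lerDl.
  by apply: sumr_ge0 => j _; apply: front_weight_ge0.
lra.
Qed.

End Bounds.

Local Open Scope ring_scope.

Lemma n2_harmonic_le_n2_ln (R : realType) n : (2 <= n)%N ->
  (n * n.+1)%:R * (6%:R * series (@harmonic R) (n./2).+1) <=
  5%:R * (1 + (ln 2%:R)^-1) * (5%:R / 2%:R * n%:R ^+ 2 * ln n%:R).
Proof.
move=> n2.
have ln2_gt0 : 0 < ln (2%:R : R) by rewrite ln_gt0 // ltr1n.
have ln_ge_ln2 : ln (2%:R : R) <= ln n%:R by rewrite ler_ln ?posrE ?ltr0n ?ler_nat //; lia.
have H_le : series (@harmonic R) (n./2).+1 <= (1 + (ln 2%:R)^-1) * ln n%:R.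
  apply: (le_trans (harmonic_series_le_ln R (n./2))).
  have ln_le : ln (n./2).+1%:R <= ln n%:R :> R.
    by rewrite ler_ln ?posrE ?ltr0n ?ler_nat //; lia.
  have one_le : 1 <= (ln 2%:R)^-1 * ln n%:R :> R by rewrite ler_pdivlMl // mulr1.
  by rewrite mulrDl mul1r addrC lerD.
have n_le : (n * n.+1)%:R <= 2%:R * n%:R ^+ 2 :> R.
  by rewrite -natrX -natrM ler_nat; nia.
have H_ge0 : 0 <= series (@harmonic R) (n./2).+1.
  by apply: sumr_ge0 => i _; apply: harmonic_ge0.
apply: (le_trans (ler_pM _ _ n_le (ler_wpM2l _ H_le))) => //; first by rewrite mulr_ge0.
have a_ge0 : 0 <= 1 + (ln 2%:R : R)^-1 by rewrite addr_ge0 // invr_ge0 ltW.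
move: (1 + _) (ln n%:R) a_ge0 (le_trans (ltW ln2_gt0) ln_ge_ln2) => a l a0 l0.
have := mulr_ge0 (mulr_ge0 a0 l0) (exprn_ge0 2 (ler0n R n)).
nra.
Qed.

Theorem theorem4 (R : realType) :
  exists (C : R) (N0 : nat),
    forall n : nat, ~~ odd n -> (N0 <= n)%N ->
      forall N : nat,
        \sum_(t < N) tail_prob n R t
          <= C * ((5%:R / 2%:R) * (n%:R ^+ 2) * ln (n%:R : R)).
Proof.
exists (5%:R * (1 + (ln 2%:R)^-1)), 2%N => n n_even n2 N.
apply: (tail_sum_le_drift n_even (g := potential R)) => [Q | P | x].
- exact: potential_ge0.
- exact: potential_drift.
- exact: le_trans (potential_set1_le R n_even x) (n2_harmonic_le_n2_ln R n2).
Qed.
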